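(* Let $n\ge 1$, let $x_1,\dots,x_n$ be distinct integers each greater than $1$, and let $D=\{1,0,x_1,\dots,x_n\}$. Then $\sigma(D)=4-n+\sum_{i=1}^n x_i$.
   Context: A signed tree is a pair $(T,s)$ where $T$ is a finite tree and $s:E(T)\to\{+,-\}$. The signed degree $sdeg(v)$ of a vertex is the number of incident positive edges minus the number of incident negative edges. $(T,s)$ realizes (satisfies) a set $D$ of integers if $D=\{sdeg(v):v\in V(T)\}$. For a set $D$ containing $1$ or $-1$, $\sigma(D)=\min\{|V(T)|: \text{some signed tree }(T,s)\text{ realizes }D\}$. *)

From mathcomp Require Import all_boot all_order all_algebra.
Set Implicit Arguments. Unset Strict Implicit. Unset Printing Implicit Defensive.
Import Order.TTheory GRing.Theory Num.Theory.

Definition simple_graph (V : finType) (e : rel V) : Prop :=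
  symmetric e /\ irreflexive e.

Definition has_cycle (V : finType) (e : rel V) : Prop :=
  exists c : seq V, [/\ 3 <= size c, uniq c & cycle e c].

Definition is_tree (V : finType) (e : rel V) : Prop :=
  [/\ simple_graph e, (forall x y : V, connect e x y) & ~ has_cycle e].

(* A sign on the edges, encoded as a symmetric boolean function on pairs
   of vertices (true = '+', false = '-'); only its values on edges matter. *)
Definition edge_sign (V : finType) (s : V -> V -> bool) : Prop :=
  forall x y, s x y = s y x.

Definition sdeg (V : finType) (e : rel V) (s : V -> V -> bool) (v : V) : int :=
  (#|[set u | e v u && s v u]|%:Z - #|[set u | e v u && ~~ s v u]|%:Z)%R.

Definition realizes (V : finType) (e : rel V) (s : V -> V -> bool)
  (D : seq int) : Prop :=
  forall z : int, z \in D <-> exists v : V, sdeg e s v = z.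

Definition signed_tree_realizing (D : seq int) (V : finType) (e : rel V)
  (s : V -> V -> bool) : Prop :=
  [/\ is_tree e, edge_sign s & realizes e s D].

Definition is_sigma (D : seq int) (k : nat) : Prop :=
  (exists (V : finType) (e : rel V) (s : V -> V -> bool),
      signed_tree_realizing D e s /\ #|V| = k) /\
  (forall (V : finType) (e : rel V) (s : V -> V -> bool),
      signed_tree_realizing D e s -> k <= #|V|).

From mathcomp Require Import all_boot all_order all_algebra.
From mathcomp Require Import zify.
Import Order.TTheory GRing.Theory Num.Theory.
Set Implicit Arguments. Unset Strict Implicit. Unset Printing Implicit Defensive.

(* Lower bound: the degrees of a tree on V sum to 2|V| - 2.  All signed
   degrees are nonnegative and, as |V| >= 2, every vertex has an edge, so
   every vertex has a positive edge and the vertex realising x_i has at least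
   x_i of them; the vertex of signed degree 0 has a negative edge, counted at
   both ends.  Hence 2|V| - 2 >= (sum_i x_i + |V| - n) + 2.
   Upper bound: a caterpillar.  The path s0 - s1 - s2 - c_0 with negative
   middle edge provides the signed degrees 1 and 0; every centre c_i receives
   x_i - 1 children, the first of which is the next centre c_(i+1), so that
   c_i has signed degree x_i and the tree has 4 + sum_i (x_i - 1) vertices. *)

Section Forest.
Variables (V : finType) (e : rel V).
Hypotheses (e_sym : symmetric e) (e_irr : irreflexive e) (e_acyclic : ~ has_cycle e).

Lemma acyclic_leaf (S : {set V}) : S != set0 ->
  exists2 v, v \in S & #|[set u in S | e v u]| <= 1.
Proof.
move=> /set0Pn [v0 v0S].
have [/exists_inP [v vS leaf_v] | ] :=
  boolP [exists v in S, #|[set u in S | e v u]| <= 1]; first by exists v.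
rewrite negb_exists_in => /forall_inP deg2.
(* As every vertex of S has two neighbours in S, a duplicate-free path in S
   either closes a cycle or extends to a longer one. *)
suff grow : forall k h t, #|V| - size (h :: t) < k -> uniq (h :: t) ->
    path e h t -> {subset h :: t <= S} -> False.
  exfalso; apply: (grow #|V|.+1 v0 [::]) => //=; first lia.
  by move=> u; rewrite inE => /eqP ->.
elim=> [//|k IH] h t size_k ht_uniq ht_path ht_S.
have /deg2 : h \in S by apply: ht_S; rewrite mem_head.
rewrite -ltnNge (cardsD1 (head h t)) => deg_h.
have /card_gt0P [u] : 0 < #|[set u in S | e h u] :\ head h t|.
  by move: deg_h; case: (_ \in _) => /=; lia.
rewrite !inE => /andP [u_new /andP [uS ehu]].
have [u_in | u_out] := boolP (u \in h :: t).
  have uh : u != h by apply: contraTneq ehu => ->; rewrite e_irr.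
  move: u_in; rewrite in_cons (negbTE uh) /= => u_t.
  case/splitPr: u_t ht_uniq ht_path u_new => t1 t2 ht_uniq ht_path u_new.
  have t1_nil : t1 != [::] by case: t1 ht_uniq ht_path u_new => //=; rewrite eqxx.
  apply: e_acyclic; exists (h :: rcons t1 u); split.
  - by rewrite /= size_rcons; case: t1 t1_nil {ht_uniq ht_path u_new}.
  - apply: subseq_uniq ht_uniq; rewrite -cats1 /= eqxx.
    by apply: cat_subseq => //; rewrite sub1seq mem_head.
  - rewrite /= rcons_path last_rcons e_sym ehu andbT.
    by move: ht_path; rewrite cat_path /= rcons_path => /and3P [-> ->].
have uht_uniq : uniq (u :: h :: t) by rewrite cons_uniq u_out ht_uniq.
apply: (IH u (h :: t)) => //.
- have := max_card (mem (u :: h :: t)); rewrite (card_uniqP uht_uniq).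
  by move: size_k => /=; lia.
- by rewrite /= e_sym ehu ht_path.
- by move=> w; rewrite in_cons => /orP [/eqP -> // | /ht_S].
Qed.

Lemma acyclic_degree_sum (S : {set V}) : S != set0 ->
  \sum_(v in S) #|[set u in S | e v u]| + 2 <= 2 * #|S|.
Proof.
have [k] := ubnP #|S|; elim: k S => // k IH S S_k S_n0.
have [v vS leaf_v] := acyclic_leaf S_n0.
set S' := S :\ v.
have card_S : #|S| = #|S'|.+1 by rewrite (cardsD1 v S) vS.
have deg_v : #|[set u in S | e v u]| = #|[set u in S' | e v u]|.
  by apply: eq_card => u; rewrite !inE; case: eqP => // ->; rewrite e_irr andbF.
have deg_S' w : w \in S' ->
    #|[set u in S | e w u]| = e v w + #|[set u in S' | e w u]|.
  move=> w_S'; rewrite (cardsD1 v) !inE vS e_sym; congr (_ + _).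
  by apply: eq_card => u; rewrite !inE andbA.
have sum_ev : \sum_(w in S') (e v w : nat) = #|[set u in S' | e v u]|.
  rewrite -sum1_card big_mkcond [RHS]big_mkcond /=.
  by apply: eq_bigr => w _; rewrite inE; case: (w \in S'); case: (e v w).
rewrite (big_setD1 v vS) /= -/S' (eq_bigr _ deg_S') big_split /= sum_ev deg_v.
have [S'0 | S'_n0] := eqVneq S' set0.
  rewrite card_S S'0 big_set0 cards0.
  by rewrite (eq_card0 (A := [set u in set0 | e v u])) // => u; rewrite !inE.
by have := IH S' _ S'_n0; lia.
Qed.

End Forest.

Lemma tree_degree_sum (V : finType) (e : rel V) : is_tree e -> 0 < #|V| ->
  \sum_v #|[set u | e v u]| + 2 <= 2 * #|V|.
Proof.
move=> [[e_sym e_irr] _ e_acyclic] /card_gt0P [v0 _].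
have -> : \sum_v #|[set u | e v u]| =
          \sum_(v in [set: V]) #|[set u in [set: V] | e v u]|.
  by apply: eq_big => [v | v _]; rewrite ?inE //; apply: eq_card => u; rewrite !inE.
rewrite -cardsT; apply: acyclic_degree_sum => //.
by apply/set0Pn; exists v0; rewrite inE.
Qed.

Lemma connected_neighbor (V : finType) (e : rel V) (w0 w1 : V) :
  (forall x y, connect e x y) -> w0 != w1 -> forall v, exists u, e v u.
Proof.
move=> e_conn w01 v.
have [y yv] : exists y, y != v.
  by case: (eqVneq w0 v) => [<- | ]; [exists w1; rewrite eq_sym | exists w0].
case/connectP: (e_conn v y) => [[|u p]] /= => [_ | /andP [evu _] _]; last by exists u.
by move=> yv'; rewrite yv' eqxx in yv.
Qed.

Section SignedDegree.
Variables (V : finType) (e : rel V) (s : V -> V -> bool).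

Definition pdeg v := #|[set u | e v u && s v u]|.
Definition ndeg v := #|[set u | e v u && ~~ s v u]|.

Lemma sdegE v : sdeg e s v = ((pdeg v)%:Z - (ndeg v)%:Z)%R.
Proof. by []. Qed.

Lemma pdeg_add_ndeg v : pdeg v + ndeg v = #|[set u | e v u]|.
Proof.
rewrite -(cardsID [set u | s v u]); congr (_ + _); apply: eq_card => u;
  by rewrite !inE andbC.
Qed.

Lemma sdeg_pos v : (forall u, s v u) -> sdeg e s v = #|[set u | e v u]|%:Z%R.
Proof.
move=> s_v; rewrite sdegE (_ : ndeg v = 0) ?subr0.
  by congr Posz; apply: eq_card => u; rewrite !inE s_v andbT.
by apply: eq_card0 => u; rewrite !inE s_v andbF.
Qed.

End SignedDegree.

Lemma leq_sum_inj (I T : finType) (g : I -> T) (G : I -> nat) (F : T -> nat) :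
  injective g -> (forall i, G i <= F (g i)) -> (forall v, 0 < F v) ->
  \sum_i G i + (#|T| - #|I|) <= \sum_v F v.
Proof.
move=> g_inj G_F F_gt0; set A := [set g i | i : I].
have card_nA : #|~: A| = #|T| - #|I| by rewrite -(cardsC A) card_imset // addKn.
have sum_A : \sum_(v in A) F v = \sum_i F (g i) by rewrite big_imset //; apply: in2W.
have split_A : \sum_v F v = \sum_(v in A) F v + \sum_(v in ~: A) F v.
  by rewrite (bigID (mem A)) /=; congr (_ + _); apply: eq_bigl => v; rewrite ?inE.
rewrite split_A sum_A -card_nA -sum1_card.
by apply: leq_add; apply: leq_sum => v _; [apply: G_F | apply: F_gt0].
Qed.

Definition signed_degrees n (y : 'I_n -> nat) : seq int :=
  ([:: 1; 0] ++ [seq (y i)%:Z | i <- enum 'I_n])%R.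

Lemma realizing_tree_card_lb n (y : 'I_n -> nat) (V : finType) (e : rel V) s :
  injective y -> signed_tree_realizing (signed_degrees y) e s ->
  \sum_i y i + 4 <= #|V| + n.
Proof.
move=> y_inj [e_tree s_sym realD]; have [[e_sym e_irr] e_conn _] := e_tree.
have sdeg_D v : sdeg e s v \in signed_degrees y by apply/realD; exists v.
have [w0 w0_0] : exists w0, sdeg e s w0 = 0%R by apply/realD; rewrite !inE eqxx orbT.
have [w1 w1_1] : exists w1, sdeg e s w1 = 1%R by apply/realD; rewrite !inE eqxx.
have w01 : w0 != w1 by apply: contra_eqN w0_0 => /eqP ->; rewrite w1_1.
have pdeg_gt0 v : 0 < pdeg e s v.
  have sdeg_ge0 : (0 <= sdeg e s v)%R.
    by move: (sdeg_D v); rewrite !inE => /or3P [/eqP -> | /eqP -> | /mapP [i _ ->]].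
  have [u evu] := connected_neighbor e_conn w01 v.
  have : 0 < #|[set u | e v u]| by apply/card_gt0P; exists u; rewrite inE.
  by rewrite -(pdeg_add_ndeg e s); move: sdeg_ge0; rewrite sdegE; lia.
have /fin_all_exists [g g_y] i : exists v, sdeg e s v = (y i)%:Z%R.
  by apply/realD; rewrite mem_cat map_f ?mem_enum ?orbT.
have g_inj : injective g.
  by move=> i j gij; apply/y_inj/eqP; rewrite -eqz_nat -g_y -g_y gij.
have sum_pdeg : \sum_i y i + (#|V| - n) <= \sum_v pdeg e s v.
  rewrite -[X in _ - X]card_ord; apply: leq_sum_inj g_inj _ pdeg_gt0 => i.
  by have := g_y i; rewrite sdegE; lia.
have sum_ndeg : 2 <= \sum_v ndeg e s v.
  have ndeg_w0 : 0 < ndeg e s w0.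
    by have := pdeg_gt0 w0; move: w0_0; rewrite sdegE; lia.
  have /card_gt0P [u] := ndeg_w0; rewrite inE => /andP [ew0u sw0u].
  have uw0 : u != w0 by apply: contraTneq ew0u => ->; rewrite e_irr.
  have ndeg_u : 0 < ndeg e s u.
    by apply/card_gt0P; exists w0; rewrite inE e_sym s_sym ew0u sw0u.
  by rewrite (bigD1 w0) //= (bigD1 u) //=; lia.
have n_le_V : n <= #|V| by rewrite -[n]card_ord; apply: leq_card g_inj.
have /(tree_degree_sum e_tree) : 0 < #|V| by apply/card_gt0P; exists w0.
have := leq_add sum_pdeg sum_ndeg.
rewrite -big_split (eq_bigr _ (fun v _ => pdeg_add_ndeg e s v)) /=; lia.
Qed.

Section ParentTree.
Variables (V : finType) (root : V) (par : V -> V) (rank : V -> nat).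
Hypotheses (par_root : par root = root)
           (rank_par : forall v, v != root -> rank (par v) < rank v).

Definition parent_rel : rel V :=
  fun u v => (u != root) && (par u == v) || (v != root) && (par v == u).

Definition children v : {set V} := [set u | (u != root) && (par u == v)].

Lemma parent_rel_sym : symmetric parent_rel.
Proof. by move=> u v; rewrite /parent_rel orbC. Qed.

Lemma connect_parent_root v : connect parent_rel v root.
Proof.
have [k] := ubnP (rank v); elim: k v => // k IH v v_k.
have [-> // | v_root] := eqVneq v root.
apply: connect_trans (connect1 _) (IH (par v) _).
  by rewrite /parent_rel v_root eqxx.
by have := rank_par v_root; lia.
Qed.

(* On a cycle, the two neighbours of the vertex of maximal rank must both be
   its parent. *)
Lemma parent_rel_acyclic : ~ has_cycle parent_rel.
Proof.
case=> c [c_size c_uniq c_cycle].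
have [a a_c] : exists a, a \in c.
  by case: c c_size {c_uniq c_cycle} => // a c _; exists a; rewrite mem_head.
case: (arg_maxnP rank a_c) => v v_c v_max.
case: (rot_to v_c) => i c' c_rot.
have : cycle parent_rel (v :: c') by rewrite -c_rot rot_cycle.
have : uniq (v :: c') by rewrite -c_rot rot_uniq.
have : 3 <= size (v :: c') by rewrite -c_rot size_rot.
have c'_max y : y \in c' -> rank y <= rank v.
  move=> y_c'; apply: v_max; change (y \in c).
  by rewrite -(mem_rot i) c_rot inE y_c' orbT.
case: c' c'_max {c_rot} => [|a1 [|a2 c'']] //= c'_max _ c'_uniq.
rewrite rcons_path /= => /and3P [e_v_a1 _ /andP [_ e_last_v]].
have par_v y : y \in a1 :: a2 :: c'' -> parent_rel v y -> par v = y.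
  move=> y_c' /orP [/andP [_ /eqP //] | /andP [y_root /eqP par_y]].
  by have := rank_par y_root; have := c'_max y y_c'; rewrite par_y; lia.
have : par v = last a2 c''.
  by apply: par_v; [rewrite inE mem_last orbT | rewrite parent_rel_sym].
rewrite (par_v a1 (mem_head _ _) e_v_a1) => a1_last.
by move: c'_uniq; rewrite a1_last mem_last /= andbF.
Qed.

Lemma parent_rel_tree : is_tree parent_rel.
Proof.
split; [split | | exact: parent_rel_acyclic].
- exact: parent_rel_sym.
- move=> v; rewrite /parent_rel orbb; apply/negP => /andP [v_root /eqP par_v].
  by have := rank_par v_root; rewrite par_v ltnn.
- move=> x y; apply: connect_trans (connect_parent_root x) _.
  by rewrite (sym_connect_sym parent_rel_sym); apply: connect_parent_root.
Qed.

Lemma card_parent_rel v (P : pred V) :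
  #|[set u | parent_rel v u && P u]| =
  ((v != root) && P (par v)) + #|[set u in children v | P u]|.
Proof.
have parent_v : parent_rel v (par v) = (v != root).
  rewrite /parent_rel eqxx andbT; have [-> | //] := eqVneq v root.
  by rewrite par_root eqxx.
rewrite (cardsD1 (par v)) inE parent_v; congr (_ + _); apply: eq_card => u.
rewrite !inE /parent_rel [par v == u]eq_sym.
have [-> /= | u_par] := eqVneq u (par v); last by rewrite andbF.
apply/esym/negP => /andP [/andP [par_v_root /eqP par_par] _].
have [v_root | v_root] := eqVneq v root.
  by rewrite v_root par_root eqxx in par_v_root.
by have := rank_par par_v_root; have := rank_par v_root; rewrite par_par; lia.
Qed.

Lemma card_parent_nbr v :
  #|[set u | parent_rel v u]| = (v != root) + #|children v|.
Proof.
transitivity #|[set u | parent_rel v u && predT u]|.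
  by apply: eq_card => u; rewrite !inE andbT.
rewrite card_parent_rel andbT; congr (_ + _).
by apply: eq_card => u; rewrite !inE andbT.
Qed.

End ParentTree.

Lemma card_set1_pred (T : finType) (a : T) (P : pred T) :
  #|[set u in [set a] | P u]| = P a.
Proof.
case Pa: (P a).
  by rewrite /= -(cards1 a); apply: eq_card => u; rewrite !inE; case: eqP => // ->.
by apply: eq_card0 => u; rewrite !inE; case: eqP => // ->.
Qed.

Section Caterpillar.
Variables (K : nat) (b : 'I_K.+1 -> nat).

(* Four spine vertices, and the (b i).+1 children of each centre i. *)
Definition cat_vertex : finType := ('I_4 + {i : 'I_K.+1 & 'I_(b i).+1})%type.

Definition spine k : cat_vertex := inl (inord k).

(* Centre 0 is the last spine vertex, centre i+1 the first child of centre i. *)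
Definition center (i : 'I_K.+1) : cat_vertex :=
  if val i is j.+1 then inr (Tagged (fun i => 'I_(b i).+1) (@ord0 (b (inord j))))
  else spine 3.

Definition cat_parent (v : cat_vertex) : cat_vertex :=
  match v with inl k => spine k.-1 | inr w => center (tag w) end.

Definition cat_rank (v : cat_vertex) : nat :=
  match v with inl k => k | inr w => 4 + tag w + tagged w end.

Definition cat_sign (u v : cat_vertex) : bool :=
  ~~ ((u == spine 1) && (v == spine 2) || (u == spine 2) && (v == spine 1)).

Local Notation cat_rel := (parent_rel (spine 0) cat_parent).
Local Notation cat_children := (children (spine 0) cat_parent).

Lemma spine_ord (k : 'I_4) : spine k = inl k.
Proof. by rewrite /spine inord_val. Qed.

Lemma eq_spine k l : k < 4 -> l < 4 -> (spine k == spine l) = (k == l).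
Proof.
move=> k4 l4; apply/eqP/eqP => [[/(congr1 val)] | -> //].
by rewrite /= !inordK.
Qed.

Lemma cat_parent_root : cat_parent (spine 0) = spine 0.
Proof. by rewrite /= inordK. Qed.

Lemma cat_rank_parent v : v != spine 0 -> cat_rank (cat_parent v) < cat_rank v.
Proof.
case: v => [k | [[[|i] i_K] j]] /=; last by rewrite inordK //; lia.
  rewrite -spine_ord eq_spine // => k0.
  by rewrite inordK ?ltn_predL ?lt0n // (leq_ltn_trans (leq_pred k)).
by rewrite inordK.
Qed.

Lemma center_inj : injective center.
Proof.
move=> [[|i] i_K] [[|j] j_K] //=; first by move=> _; apply: val_inj.
move=> /(congr1 (fun v : cat_vertex => if v is inr w then val (tag w) else 0)).
by rewrite /= !inordK; [move=> ij; apply: val_inj => /=; rewrite ij | lia | lia].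
Qed.

Lemma center_neq_spine i k : k < 3 -> (center i == spine k) = false.
Proof.
by case: i => [[|i] i_K] k3 //=; rewrite eq_spine //; [apply/negbTE/eqP; lia | lia].
Qed.

Lemma children_spine k : k < 3 -> cat_children (spine k) = [set spine k.+1].
Proof.
move=> k3; apply/setP => [[l | w]]; rewrite !inE /=; last by rewrite center_neq_spine.
rewrite -!spine_ord !eq_spine ?(leq_ltn_trans (leq_pred _) (ltn_ord l)) //; last lia.
by case: (nat_of_ord l).
Qed.

Lemma children_center i :
  cat_children (center i) = [set inr (Tagged _ j) | j : 'I_(b i).+1].
Proof.
apply/setP => [[[k k4] | [i' j]]]; rewrite !inE /=.
  rewrite [spine _ == _]eq_sym center_neq_spine; last lia.
  by rewrite andbF; apply/esym/imsetP => [[]].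
rewrite (inj_eq center_inj).
by apply/eqP/imsetP => [<- | [j' _ [ij _]]]; [exists j | ].
Qed.

Lemma card_children_center i : #|cat_children (center i)| = (b i).+1.
Proof.
rewrite children_center card_imset ?card_ord // => j1 j2 [/eqP].
by rewrite eq_Tagged => /eqP.
Qed.

Lemma children_inr w :
  (exists i, inr w = center i) \/ cat_children (inr w) = set0.
Proof.
have [-> | /set0Pn [[k | w'] /[!inE] /andP [_ /eqP par_u]]] :=
  eqVneq (cat_children (inr w)) set0; [by right | by [] | left].
by exists (tag w').
Qed.

Lemma cat_parent_spine k : k < 4 -> cat_parent (spine k) = spine k.-1.
Proof. by move=> k4; rewrite /= inordK. Qed.

Let card_cat_rel := card_parent_rel cat_parent_root cat_rank_parent.

Lemma sdeg_unsigned v : v != spine 1 -> v != spine 2 ->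
  sdeg cat_rel cat_sign v = ((v != spine 0) + #|cat_children v|)%:Z%R.
Proof.
move=> v1 v2; rewrite sdeg_pos ?(card_parent_nbr cat_parent_root cat_rank_parent) //.
by move=> u; rewrite /cat_sign (negbTE v1) (negbTE v2).
Qed.

Lemma sdeg_spine_neg k : (k == 1) || (k == 2) -> sdeg cat_rel cat_sign (spine k) = 0%R.
Proof.
move=> /orP [] /eqP ->;
  rewrite sdegE /pdeg /ndeg !card_cat_rel children_spine // !card_set1_pred;
  by rewrite cat_parent_spine // /cat_sign !eq_spine.
Qed.

Lemma sdeg_spine0 : sdeg cat_rel cat_sign (spine 0) = 1%R.
Proof. by rewrite sdeg_unsigned ?eq_spine // eqxx children_spine // cards1. Qed.

Lemma sdeg_center i : sdeg cat_rel cat_sign (center i) = (b i).+2%:Z%R.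
Proof. by rewrite sdeg_unsigned ?center_neq_spine // card_children_center. Qed.

Lemma sdeg_leaf w : cat_children (inr w) = set0 -> sdeg cat_rel cat_sign (inr w) = 1%R.
Proof. by move=> no_child; rewrite sdeg_unsigned // no_child cards0. Qed.

Lemma caterpillar_realizes :
  signed_tree_realizing (signed_degrees (fun i => (b i).+2)) cat_rel cat_sign.
Proof.
split; first exact: parent_rel_tree cat_rank_parent.
  by move=> u v; rewrite /cat_sign; do 2 case: (u == _); do 2 case: (v == _).
have center_D i : (b i).+2%:Z%R \in signed_degrees (fun i => (b i).+2).
  by rewrite mem_cat map_f ?mem_enum ?orbT.
move=> z; split.
  rewrite !inE => /or3P [/eqP -> | /eqP -> | /mapP [i _ ->]].
  - by exists (spine 0); rewrite sdeg_spine0.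
  - by exists (spine 1); rewrite sdeg_spine_neg.
  - by exists (center i); rewrite sdeg_center.
move=> [[k | w] <-].
  rewrite -spine_ord; case: k => [[|[|[|[|k]]]] k4] //.
  - by rewrite sdeg_spine0.
  - by rewrite sdeg_spine_neg.
  - by rewrite sdeg_spine_neg.
  - by rewrite (_ : spine 3 = center ord0) // sdeg_center center_D.
have [[i ->] | /sdeg_leaf ->] := children_inr w; last by [].
by rewrite sdeg_center center_D.
Qed.

Lemma card_cat_vertex : #|cat_vertex| = 4 + \sum_i (b i).+1.
Proof. by rewrite card_sum card_ord tagnat.card. Qed.

End Caterpillar.

Theorem mainTheorem12 (n : nat) (x : 'I_n -> int) :
  (1 <= n)%N -> injective x -> (forall i, (1 < x i)%R) ->
  exists k : nat,
    is_sigma ([:: 1%R; 0%R] ++ [seq x i | i <- enum 'I_n]) k /\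
    (k%:Z = 4%:Z - n%:Z + \sum_(i < n) x i)%R.
Proof.
case: n x => [//|K] x _ x_inj x_gt1.
pose b i := (`|x i| - 2)%N.
have x_b i : x i = (b i).+2%:Z%R.
  by have := x_gt1 i; rewrite /b; case: (x i) => m //=; lia.
have y_inj : injective (fun i => (b i).+2).
  by move=> i j /(congr1 Posz); rewrite -!x_b => /x_inj.
have sum_b : \sum_i (b i).+2 = \sum_i (b i).+1 + K.+1.
  rewrite (eq_bigr (fun i => (b i).+1 + 1)) => [|i _]; last by rewrite addn1.
  by rewrite big_split /= sum1_card card_ord.
have -> : [:: 1%R; 0%R] ++ [seq x i | i <- enum 'I_K.+1] =
          signed_degrees (fun i => (b i).+2).
  by congr (_ ++ _); apply: eq_map.
exists #|cat_vertex b|; split.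
  split; last first.
    move=> V e s /(realizing_tree_card_lb y_inj).
    by rewrite card_cat_vertex sum_b; lia.
  by exists (cat_vertex b); do 2 eexists; split; first exact: caterpillar_realizes.
rewrite card_cat_vertex (eq_bigr _ (fun i _ => x_b i)).
by rewrite -(big_morph Posz PoszD (erefl 0%Z)) sum_b; lia.
Qed.
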